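(* For positive integers $m\le k\le n$, define $$g(m,n,k)=\max_y\Big\{\sum_{\tau=0}^{m}\frac{\binom{n-m}{k-\tau}}{(n-m)^{m-\tau}\binom{n-m}{k-m}}\cdot\frac{\binom{m}{\tau}}{m^{\tau}}(k-y)^{m-\tau}y^{\tau}:\ \frac{mk}{n}\le y\le m\Big\}.$$ Then for any $n\ge k\ge m$, $$[g(m,n,k)]^{1/m}\le \lim_{t\to\infty}[g(m,t,k)]^{1/m}\le \min\Big\{e,\ 1+\frac{k}{k-m+1}\Big\}.$$
   Context: Binomial coefficients $\binom{a}{b}$ are $0$ when $b>a$ or $b<0$; the limit is over integers $t\to\infty$. *)

From HB Require Import structures.
From mathcomp Require Import all_boot all_order all_algebra.
From mathcomp Require Import all_classical all_reals all_analysis.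
Set Implicit Arguments. Unset Strict Implicit. Unset Printing Implicit Defensive.
Import Order.TTheory GRing.Theory Num.Theory.
Local Open Scope ring_scope.
Local Open Scope classical_set_scope.

(* Binomial coefficients are natural numbers ('C(a,b) = 0 when b > a);
   nat subtractions k - tau, n - m, m - tau are never truncated here since
   tau <= m <= k <= n. Division by zero follows MathComp's convention x/0 = 0
   (relevant only in the degenerate case n = m). *)
Definition gsum (R : realType) (m n k : nat) (y : R) : R :=
  \sum_(0 <= tau < m.+1)
     ('C(n - m, k - tau)%:R / ((n - m)%:R ^+ (m - tau) * 'C(n - m, k - m)%:R))
     * ('C(m, tau)%:R / m%:R ^+ tau)
     * (k%:R - y) ^+ (m - tau) * y ^+ tau.

(* g(m,n,k) = max { gsum y : mk/n <= y <= m }; the max is attained (continuous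
   function on a nonempty compact interval), so it equals the supremum. *)
Definition g (R : realType) (m n k : nat) : R :=
  sup [set gsum m n k y | y in [set y : R | (m * k)%:R / n%:R <= y <= m%:R]].

From HB Require Import structures.
From mathcomp Require Import all_boot all_order all_algebra.
From mathcomp Require Import all_classical all_reals all_analysis.
From mathcomp Require Import zify ring lra.
Import Order.TTheory GRing.Theory Num.Theory numFieldNormedType.Exports.
Local Open Scope ring_scope.
Local Open Scope classical_set_scope.

(* Write a = k - m and j = m - tau. The coefficient of the tau-th summand of
   [gsum m t k] factors as ((t - k)^_j / (t - m)^j) * (a! / (a + j)!); the first
   factor is at most 1 and nondecreasing in t. Since the domain [mk/t, m] also
   grows with t, g(m, t, k) is nondecreasing in t, and it is bounded by the max
   of the sum with the first factor dropped, so its m-th root converges. That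
   sum is bounded in two ways: a!/(a + j)! <= (a + 1)^-j turns it into
   ((k - y)/(k - m + 1) + y/m)^m <= (1 + k/(k - m + 1))^m, while
   (a + s)^j a!/(a + j)! <= e^s with s = m - y turns it into
   e^(m - y) (1 + y/m)^m <= e^m. *)

Lemma ffactD (N a j : nat) : (N ^_ (a + j) = N ^_ a * (N - a) ^_ j)%N.
Proof.
elim: j => [|j IH]; first by rewrite addn0 ffactn0 muln1.
by rewrite addnS !ffactnSr IH subnDA mulnA.
Qed.

Lemma ffact_subn_leq_expn (N a j : nat) : ((N - a) ^_ j <= N ^ j)%N.
Proof.
elim: j => [|j IH] //; rewrite ffactnSr expnSr leq_mul //; lia.
Qed.

Lemma leq_ffact_subn_cross (a N N' j : nat) : (a <= N)%N -> (N <= N')%N ->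
  ((N - a) ^_ j * N' ^ j <= (N' - a) ^_ j * N ^ j)%N.
Proof.
move=> aN NN'; elim: j => [|j IH]; first by rewrite !muln1.
rewrite !ffactnSr !expnSr mulnACA [leqRHS]mulnACA leq_mul //.
have [Naj|ajN] := leqP N (a + j); last by nia.
by rewrite (_ : N - a - j = 0)%N ?mul0n //; lia.
Qed.

Lemma leq_fact_mul_expn (a j : nat) : (a`! * a.+1 ^ j <= (a + j)`!)%N.
Proof.
elim: j => [|j IH]; first by rewrite muln1 addn0.
by rewrite expnSr addnS factS mulnA mulnC leq_mul // ltnS leq_addr.
Qed.

Section FactorialQuotients.
Variable R : realFieldType.

Definition fact_quot (a j : nat) : R := a`!%:R / (a + j)`!%:R.

Definition ffact_quot (a N j : nat) : R := ((N - a) ^_ j)%:R / N%:R ^+ j.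

Lemma fact_quot_ge0 a j : 0 <= fact_quot a j.
Proof. by rewrite divr_ge0. Qed.

Lemma fact_quot0 a : fact_quot a 0 = 1.
Proof. by rewrite /fact_quot addn0 divff // pnatr_eq0 -lt0n fact_gt0. Qed.

Lemma fact_quotS a j : fact_quot a j.+1 = fact_quot a j / (a + j).+1%:R.
Proof. by rewrite /fact_quot addnS factS natrM invfM; ring. Qed.

Lemma fact_quot_le_invX a j : fact_quot a j <= (a.+1%:R ^+ j)^-1.
Proof.
rewrite ler_pdivrMr ?ltr0n ?fact_gt0 // mulrC ler_pdivlMr ?exprn_gt0 //.
by rewrite -natrX -natrM ler_nat leq_fact_mul_expn.
Qed.

Lemma ffact_quot_ge0 a N j : 0 <= ffact_quot a N j.
Proof. by rewrite divr_ge0 // exprn_ge0. Qed.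

Lemma ffact_quot_le1 a N j : ffact_quot a N j <= 1.
Proof.
have [N0|N0] := posnP N.
  case: j => [|j]; first by rewrite /ffact_quot expr0 divr1.
  by rewrite /ffact_quot N0 expr0n /= invr0 mulr0.
rewrite ler_pdivrMr ?exprn_gt0 ?ltr0n // mul1r -natrX ler_nat.
exact: ffact_subn_leq_expn.
Qed.

Lemma ffact_quot_homo a N N' j : (a <= N)%N -> (N <= N')%N ->
  ffact_quot a N j <= ffact_quot a N' j.
Proof.
move=> aN NN'; have [N0|N0] := posnP N.
  case: j => [|j]; first by rewrite /ffact_quot !expr0 !divr1.
  by rewrite /ffact_quot N0 sub0n ffact0n mul0r ffact_quot_ge0.
have N'0 : (0 < N')%N by exact: leq_trans NN'.
rewrite ler_pdivrMr ?exprn_gt0 ?ltr0n // mulrAC ler_pdivlMr ?exprn_gt0 ?ltr0n //.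
by rewrite -!natrX -!natrM ler_nat leq_ffact_subn_cross.
Qed.

Lemma binom_quotE (a N j : nat) : (a <= N)%N ->
  'C(N, a + j)%:R / (N%:R ^+ j * 'C(N, a)%:R) = ffact_quot a N j * fact_quot a j.
Proof.
move=> aN; have fact_neq0 n : n`!%:R != 0 :> R by rewrite pnatr_eq0 -lt0n fact_gt0.
have ffact_neq0 : (N ^_ a)%:R != 0 :> R by rewrite pnatr_eq0 -lt0n ffact_gt0.
have binomE n i : 'C(n, i)%:R = (n ^_ i)%:R / i`!%:R :> R.
  by rewrite -bin_ffact natrM mulfK.
rewrite !binomE ffactD natrM /ffact_quot /fact_quot.
have [->|NX0] := eqVneq (N%:R ^+ j : R) 0; first by rewrite !mul0r invr0 !mulr0 mul0r.
by field; rewrite NX0 ffact_neq0 !fact_neq0.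
Qed.

Lemma exprS_mul_fact_quotS (x : R) a j :
  x ^+ j.+1 * fact_quot a j.+1 = x ^+ j * fact_quot a j * (x / (a + j).+1%:R).
Proof. by rewrite fact_quotS exprSr; ring. Qed.

(* The new factor [(a + s)/(a + j + 1)] is at most [s/(j + 1)] because [j + 1 <= s]. *)
Lemma shifted_fact_quot_le (a j : nat) (s : R) : j%:R <= s ->
  (a%:R + s) ^+ j * fact_quot a j <= s ^+ j / j`!%:R.
Proof.
elim: j => [|j IH] js; first by rewrite fact_quot0 !expr0 mulr1 fact0 divr1.
have s_gt0 : 0 < s by apply: lt_le_trans js; rewrite ltr0n.
have factor_le : (a%:R + s) / (a + j).+1%:R <= s / j.+1%:R.
  rewrite ler_pdivrMr ?ltr0n // mulrAC ler_pdivlMr ?ltr0n //.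
  have a_ge0 : 0 <= a%:R :> R by [].
  move: js; rewrite -addn1 -[(a + j).+1]addn1 !natrD => js; nra.
rewrite exprS_mul_fact_quotS [leRHS](_ : _ = s ^+ j / j`!%:R * (s / j.+1%:R)); last first.
  by rewrite exprSr factS natrM invfM; ring.
apply: ler_pM => //.
- by rewrite mulr_ge0 ?fact_quot_ge0 // exprn_ge0 // addr_ge0 // ltW.
- by rewrite divr_ge0 // addr_ge0 // ltW.
- by apply: IH; apply: le_trans js; rewrite ler_nat.
Qed.

End FactorialQuotients.

(* Once [s < j + 1] the new factors are at most 1, so the bound at the last
   [j <= s] persists, and there [s ^+ j / j`! <= expR s]. *)
Lemma shifted_fact_quot_le_expR (R : realType) (a j : nat) (s : R) : 0 <= s ->
  (a%:R + s) ^+ j * fact_quot R a j <= expR s.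
Proof.
move=> s_ge0; elim: j => [|j IH].
  by rewrite fact_quot0 expr0 mulr1; apply: le_trans (expR_ge1Dx s); rewrite lerDl.
have [js|sj] := leP j.+1%:R s.
  apply: le_trans (shifted_fact_quot_le _ _ _ _ js) _.
  by apply: le_trans (expR_ge1Dxn j s_ge0); rewrite lerDr.
rewrite exprS_mul_fact_quotS; apply: le_trans IH.
rewrite ler_piMr ?mulr_ge0 ?fact_quot_ge0 ?exprn_ge0 ?addr_ge0 //.
by rewrite ler_pdivrMr ?ltr0n // mul1r -addnS natrD lerD2l ltW.
Qed.

Lemma powR_invn_le (R : realType) (m : nat) (x b : R) : (0 < m)%N -> 0 <= x -> 0 <= b ->
  x <= b ^+ m -> x `^ m%:R^-1 <= b.
Proof.
move=> m_gt0 x_ge0 b_ge0 x_le; have m_neq0 : m%:R != 0 :> R by rewrite pnatr_eq0 -lt0n.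
apply: le_trans (ge0_ler_powR _ _ _ x_le) _; rewrite ?nnegrE ?invr_ge0 ?exprn_ge0 //.
by rewrite -powR_mulrn // -powRrM mulfV // powRr1.
Qed.

Lemma nondecreasing_bounded_cvg (R : realType) (u : R^nat) (n : nat) (b : R) :
  (forall t t', (n <= t)%N -> (t <= t')%N -> u t <= u t') ->
  (forall t, (n <= t)%N -> u t <= b) ->
  exists L, u @ \oo --> L /\ u n <= L /\ L <= b.
Proof.
move=> u_homo u_le_b; pose v i := u (i + n)%N.
have v_homo : nondecreasing_seq v by move=> i j ij; apply: u_homo; lia.
have v_ub : ubound (range v) b by move=> _ [i _ <-]; apply: u_le_b; lia.
exists (sup (range v)); split.
  by rewrite -(cvg_shiftn n); apply: nondecreasing_cvgn => //; exists b.
split; first by apply: ub_le_sup; [exists b | exists 0%N].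
by apply: ge_sup => //; exists (v 0%N), 0%N.
Qed.

Section GBounds.
Variables (R : realType) (m k : nat).
Hypotheses (m_gt0 : (0 < m)%N) (mk : (m <= k)%N).
Implicit Types (y : R) (t : nat).

Definition gterm (tau : nat) (y : R) : R :=
  fact_quot R (k - m) (m - tau) * ('C(m, tau)%:R / m%:R ^+ tau)
  * (k%:R - y) ^+ (m - tau) * y ^+ tau.

(* The pointwise limit of [gsum m t k] as [t -> oo], since [ffact_quot a t j -> 1]. *)
Definition gsum_infty (y : R) : R := \sum_(0 <= tau < m.+1) gterm tau y.

Lemma gsumE t y : (k <= t)%N ->
  gsum m t k y = \sum_(0 <= tau < m.+1) ffact_quot R (k - m) (t - m) (m - tau) * gterm tau y.
Proof.
move=> kt; apply: eq_big_nat => tau /andP[_ tau_le_m].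
rewrite (_ : k - tau = (k - m) + (m - tau))%N; last by lia.
rewrite binom_quotE; last by lia.
by rewrite /gterm !mulrA.
Qed.

Lemma gterm_ge0 tau y : 0 <= y <= m%:R -> 0 <= gterm tau y.
Proof.
move=> /andP[y_ge0 y_le_m]; have y_le_k : y <= k%:R by apply: le_trans y_le_m _; rewrite ler_nat.
by rewrite !mulr_ge0 ?fact_quot_ge0 ?divr_ge0 ?exprn_ge0 ?subr_ge0.
Qed.

Lemma gsum_ge0 t y : (k <= t)%N -> 0 <= y <= m%:R -> 0 <= gsum m t k y.
Proof.
move=> kt y_in; rewrite gsumE //; apply: sumr_ge0 => tau _.
by rewrite mulr_ge0 ?ffact_quot_ge0 ?gterm_ge0.
Qed.

Lemma gsum_le_infty t y : (k <= t)%N -> 0 <= y <= m%:R -> gsum m t k y <= gsum_infty y.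
Proof.
move=> kt y_in; rewrite gsumE //; apply: ler_sum_nat => tau _.
by rewrite ler_piMl ?ffact_quot_le1 ?gterm_ge0.
Qed.

Lemma gsum_homo t t' y : (k <= t)%N -> (t <= t')%N -> 0 <= y <= m%:R ->
  gsum m t k y <= gsum m t' k y.
Proof.
move=> kt tt' y_in; rewrite !gsumE //; last exact: leq_trans tt'.
apply: ler_sum_nat => tau _; rewrite ler_wpM2r ?gterm_ge0 // ffact_quot_homo //; lia.
Qed.

Lemma gsum_infty_le_binom y : 0 <= y <= m%:R ->
  gsum_infty y <= (1 + k%:R / (k - m + 1)%:R) ^+ m.
Proof.
move=> /andP[y_ge0 y_le_m].
have m_pos : 0 < m%:R :> R by rewrite ltr0n.
have km_pos : 0 < (k - m + 1)%:R :> R by rewrite ltr0n addn1.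
have ky_ge0 : 0 <= k%:R - y by rewrite subr_ge0; apply: le_trans y_le_m _; rewrite ler_nat.
apply: (@le_trans _ _ (((k%:R - y) / (k - m + 1)%:R + y / m%:R) ^+ m)).
  rewrite exprDn /gsum_infty big_mkord; apply: ler_sum => tau _.
  rewrite /gterm !expr_div_n [leRHS](_ : _ = (k - m).+1%:R ^-1 ^+ (m - tau)
    * ('C(m, tau)%:R / m%:R ^+ tau) * (k%:R - y) ^+ (m - tau) * y ^+ tau); last first.
    by rewrite addn1 exprVn; ring.
  rewrite ler_wpM2r ?exprn_ge0 // ler_wpM2r ?exprn_ge0 // ler_wpM2r ?divr_ge0 //.
  by rewrite exprVn fact_quot_le_invX.
apply: lerXn2r; rewrite ?nnegrE ?addr_ge0 ?divr_ge0 //.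
rewrite addrC; apply: lerD; first by rewrite ler_pdivrMr // mul1r.
by rewrite ler_pM2r ?invr_gt0 // lerBlDr lerDl.
Qed.

Lemma gsum_infty_le_expR y : 0 <= y <= m%:R -> gsum_infty y <= expR 1 ^+ m.
Proof.
move=> /andP[y_ge0 y_le_m].
have m_pos : 0 < m%:R :> R by rewrite ltr0n.
apply: (@le_trans _ _ (expR (m%:R - y) * (1 + y / m%:R) ^+ m)).
  rewrite exprDn /gsum_infty big_mkord mulr_sumr; apply: ler_sum => tau _.
  rewrite expr1n mul1r expr_div_n /gterm.
  rewrite [leLHS](_ : _ = (k%:R - y) ^+ (m - tau) * fact_quot R (k - m) (m - tau) *
     ('C(m, tau)%:R / m%:R ^+ tau * y ^+ tau)); last by ring.
  rewrite [leRHS](_ : _ = expR (m%:R - y) * ('C(m, tau)%:R / m%:R ^+ tau * y ^+ tau)); last by ring.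
  rewrite ler_wpM2r ?mulr_ge0 ?divr_ge0 ?exprn_ge0 //.
  have -> : k%:R - y = (k - m)%:R + (m%:R - y) by rewrite natrB // addrA subrK.
  by rewrite shifted_fact_quot_le_expR // subr_ge0.
have -> : expR 1 ^+ m = expR (m%:R - y) * expR (y / m%:R) ^+ m.
  by rewrite -!expRM_natl mulr1 [m%:R * _]mulrC divfK ?lt0r_neq0 // -expRD subrK.
rewrite ler_wpM2l ?expR_ge0 //.
apply: lerXn2r; rewrite ?nnegrE ?addr_ge0 ?divr_ge0 ?expR_ge0 //.
exact: expR_ge1Dx.
Qed.

Let gdom t := [set y : R | (m * k)%:R / t%:R <= y <= m%:R].
Let gbound : R := Num.min (expR 1) (1 + k%:R / (k - m + 1)%:R).

Lemma gbound_ge0 : 0 <= gbound.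
Proof. by rewrite /gbound le_min expR_ge0 addr_ge0 ?divr_ge0. Qed.

Lemma gdom_ge0 t y : gdom t y -> 0 <= y <= m%:R.
Proof. by move=> /andP[ge y_le_m]; rewrite y_le_m andbT; apply: le_trans ge; rewrite divr_ge0. Qed.

Lemma gdom_m t : (k <= t)%N -> gdom t m%:R.
Proof.
move=> kt; have t_gt0 : (0 < t)%N by lia.
rewrite /gdom /= lexx andbT ler_pdivrMr ?ltr0n //.
by rewrite -natrM ler_nat leq_mul.
Qed.

Lemma gdom_homo t t' : (0 < t)%N -> (t <= t')%N -> gdom t `<=` gdom t'.
Proof.
move=> t_gt0 tt' y /andP[ge y_le_m]; rewrite /gdom /= y_le_m andbT; apply: le_trans ge.
by rewrite ler_wpM2l // lef_pV2 ?posrE ?ltr0n ?ler_nat //; exact: leq_trans tt'.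
Qed.

Lemma gsum_le_gboundX t y : (k <= t)%N -> gdom t y -> gsum m t k y <= gbound ^+ m.
Proof.
move=> kt /gdom_ge0 y_in; apply: le_trans (gsum_le_infty _ _ kt y_in) _.
rewrite /gbound /Num.min; case: ifP => _.
  exact: gsum_infty_le_expR.
exact: gsum_infty_le_binom.
Qed.

Lemma has_sup_gsum t : (k <= t)%N -> has_sup [set gsum m t k y | y in gdom t].
Proof.
move=> kt; split; first by exists (gsum m t k m%:R), m%:R => //; exact: gdom_m.
by exists (gbound ^+ m) => _ [y y_in <-]; exact: gsum_le_gboundX.
Qed.

Lemma g_ge0 t : (k <= t)%N -> 0 <= g R m t k.
Proof.
move=> kt; have m_in := gdom_m _ kt.
apply: le_trans (gsum_ge0 _ _ kt (gdom_ge0 _ _ m_in)) _.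
by apply: ub_le_sup; [case: (has_sup_gsum _ kt) | exists m%:R].
Qed.

Lemma g_le_gboundX t : (k <= t)%N -> g R m t k <= gbound ^+ m.
Proof.
move=> kt; apply: ge_sup; first by case: (has_sup_gsum _ kt).
by move=> _ [y y_in <-]; exact: gsum_le_gboundX.
Qed.

Lemma g_homo t t' : (k <= t)%N -> (t <= t')%N -> g R m t k <= g R m t' k.
Proof.
move=> kt tt'; have kt' := leq_trans kt tt'.
apply: sup_le; [|by case: (has_sup_gsum _ kt) | exact: has_sup_gsum].
move=> _ [y y_in <-]; exists (gsum m t' k y); split.
  by exists y => //; apply: gdom_homo y_in; lia.
exact: gsum_homo _ _ _ kt tt' (gdom_ge0 _ _ y_in).
Qed.

Lemma g_root_homo t t' : (k <= t)%N -> (t <= t')%N ->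
  g R m t k `^ m%:R^-1 <= g R m t' k `^ m%:R^-1.
Proof.
move=> kt tt'; apply: ge0_ler_powR; rewrite ?nnegrE ?invr_ge0 ?g_ge0 ?g_homo //.
exact: leq_trans tt'.
Qed.

Lemma g_root_le_gbound t : (k <= t)%N -> g R m t k `^ m%:R^-1 <= gbound.
Proof.
move=> kt; apply: powR_invn_le; rewrite ?g_ge0 ?gbound_ge0 ?g_le_gboundX //.
Qed.

End GBounds.

Theorem proposition2 (R : realType) (m k n : nat) :
  (0 < m)%N -> (m <= k)%N -> (k <= n)%N ->
  exists L : R,
    ((fun t : nat => g R m t k `^ (m%:R)^-1) @ \oo --> (L : R)) /\
    g R m n k `^ (m%:R)^-1 <= L /\
    L <= Num.min (expR 1) (1 + k%:R / (k - m + 1)%:R).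
Proof.
move=> m_gt0 mk kn; apply: nondecreasing_bounded_cvg => [t t' nt tt'|t nt].
  by apply: g_root_homo => //; exact: leq_trans nt.
by apply: g_root_le_gbound => //; exact: leq_trans nt.
Qed.
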